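(* Let $B=[\mathbf a_1\ \cdots\ \mathbf a_n]$ be an $m\times n$ integer matrix with columns $\mathbf a_i$ such that $\mathbf a_1=\mathbf a_2$, and let $H=\ker(B)\cap\mathbb N_0^n$. Let $B'=[\mathbf a_1\ \mathbf a_3\ \cdots\ \mathbf a_n]$ and $H'=\ker(B')\cap\mathbb N_0^{n-1}$. Then there is a transfer homomorphism $\theta\colon H\to H'$.
   Context: $H$ and $H'$ are monoids under addition. A transfer homomorphism between reduced atomic monoids $H\to T$ is a surjective monoid homomorphism $\theta$ with $\theta^{-1}(0)=\{0\}$ such that whenever $\theta(a)=s+t$ with $s,t\in T$, there exist $b,c\in H$ with $a=b+c$, $\theta(b)=s$, $\theta(c)=t$. *)

From mathcomp Require Import all_boot all_order all_algebra.
Set Implicit Arguments. Unset Strict Implicit. Unset Printing Implicit Defensive.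
Import GRing.Theory Num.Theory.
Local Open Scope ring_scope.

Definition nonneg_ker (m n : nat) (B : 'M[int]_(m, n)) (x : 'cV[int]_n) : Prop :=
  (forall i, 0 <= x i 0) /\ B *m x = 0.

Definition is_transfer_hom (U V : zmodType) (H : U -> Prop) (T : V -> Prop)
    (theta : U -> V) : Prop :=
  (forall x, H x -> T (theta x)) /\
  theta 0 = 0 /\
  (forall x y, H x -> H y -> theta (x + y) = theta x + theta y) /\
  (forall t, T t -> exists x, H x /\ theta x = t) /\
  (forall x, H x -> theta x = 0 -> x = 0) /\
  (forall a s t, H a -> T s -> T t -> theta a = s + t ->
         exists b c, [/\ H b, H c, a = b + c, theta b = s & theta c = t]).

From HB Require Import structures.
From mathcomp Require Import all_boot all_order all_algebra.
From mathcomp Require Import lra.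
Set Implicit Arguments. Unset Strict Implicit. Unset Printing Implicit Defensive.
Local Open Scope ring_scope.
Import GRing.Theory Num.Theory Order.TTheory.

(* The map [merge_coord i j] deletes coordinate [i] and adds it onto coordinate
   [lift i j].  When these two columns of [B] agree, [B x] equals
   [col' i B] applied to the merged vector, so merging maps [ker B] into the
   kernel of the smaller matrix, onto it (insert a zero coordinate), and is
   injective at 0 on nonnegative vectors.  To lift a splitting
   [merge a = s + t], give [b] the amount [min (s_j, a_(lift i j))] in the
   twin coordinate and the rest of [s_j] in the deleted one; then both [b]
   and [a - b] are nonnegative. *)

Definition merge_coord (R : zmodType) (n : nat) (i : 'I_n.+1) (j : 'I_n)
    (x : 'cV[R]_n.+1) : 'cV[R]_n :=
  \col_k (x (lift i k) 0 + (if k == j then x i 0 else 0)).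

Definition insert0_coord (R : zmodType) (n : nat) (i : 'I_n.+1)
    (x : 'cV[R]_n) : 'cV[R]_n.+1 :=
  \col_k (if unlift i k is Some k' then x k' 0 else 0).

Section MergeCoord.
Variables (R : zmodType) (n : nat) (i : 'I_n.+1) (j : 'I_n).

Lemma merge_coordB : {morph @merge_coord R n i j : x y / x - y}.
Proof.
move=> x y; apply/matrixP => k l; rewrite !mxE.
by case: (k == j); rewrite ?addr0 // opprD addrACA.
Qed.

HB.instance Definition _ :=
  GRing.isZmodMorphism.Build _ _ (@merge_coord R n i j) merge_coordB.

Lemma merge_coordK : cancel (@insert0_coord R n i) (merge_coord i j).
Proof.
move=> x; apply/matrixP => k l; rewrite (ord1 l) !mxE liftK unlift_none.
by case: (k == j); rewrite addr0.
Qed.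

End MergeCoord.

Lemma mul_col'_merge_coord (R : ringType) (m n : nat) (B : 'M[R]_(m, n.+1))
    (i : 'I_n.+1) (j : 'I_n) (x : 'cV[R]_n.+1) :
  col (lift i j) B = col i B -> col' i B *m merge_coord i j x = B *m x.
Proof.
move=> eq_col; apply/matrixP => r l; rewrite (ord1 l) !mxE (bigD1_ord i) //=.
under eq_bigr => k _ do rewrite !mxE mulrDr.
rewrite big_split /= addrC; congr (_ + _).
rewrite (bigD1 j) //= big1 => [|k /negbTE ->]; last by rewrite mulr0.
have := congr1 (fun M : 'cV[R]_m => M r 0) eq_col.
by rewrite !mxE eqxx addr0 => ->.
Qed.

Definition nonneg_col (R : numDomainType) (n : nat) (x : 'cV[R]_n) : Prop :=
  forall k, 0 <= x k 0.

Section NonnegMerge.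
Variables (R : realDomainType) (n : nat) (i : 'I_n.+1) (j : 'I_n).
Implicit Types (x a : 'cV[R]_n.+1) (s t : 'cV[R]_n).

Lemma merge_coord_nonneg x : nonneg_col x -> nonneg_col (merge_coord i j x).
Proof. by move=> x_ge0 k; rewrite mxE; case: ifP; rewrite ?addr0 ?addr_ge0. Qed.

Lemma insert0_coord_nonneg (x : 'cV[R]_n) :
  nonneg_col x -> nonneg_col (insert0_coord i x).
Proof. by move=> x_ge0 k; rewrite mxE; case: (unlift i k). Qed.

Lemma merge_coord_eq0 x :
  nonneg_col x -> merge_coord i j x = 0 -> x = 0.
Proof.
move=> x_ge0 /matrixP x0; apply/matrixP => k l; rewrite (ord1 l) mxE.
have xj0 := x0 j 0; rewrite !mxE eqxx in xj0.
have xi_ge0 := x_ge0 i; have xij_ge0 := x_ge0 (lift i j).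
case: (unliftP i k) => [k' ->|->]; last by lra.
have := x0 k' 0; rewrite !mxE; case: eqP => [->|_]; first by lra.
by rewrite addr0.
Qed.

Lemma merge_coord_split a s t :
  nonneg_col a -> nonneg_col s -> nonneg_col t -> merge_coord i j a = s + t ->
  exists b c, [/\ nonneg_col b, nonneg_col c, a = b + c,
                  merge_coord i j b = s & merge_coord i j c = t].
Proof.
move=> a_ge0 s_ge0 t_ge0 merge_a.
have a_lift k : a (lift i k) 0 + (if k == j then a i 0 else 0) = s k 0 + t k 0.
  by have /matrixP/(_ k 0) := merge_a; rewrite !mxE.
pose u := Num.min (s j 0) (a (lift i j) 0).
have u_cases : (u = s j 0 /\ s j 0 <= a (lift i j) 0) \/
               (u = a (lift i j) 0 /\ a (lift i j) 0 < s j 0).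
  by rewrite /u minEle; case: leP; [left | right].
pose b := \col_k (if unlift i k is Some k' then (if k' == j then u else s k' 0)
                  else s j 0 - u).
have merge_b : merge_coord i j b = s.
  apply/matrixP => k l; rewrite (ord1 l) !mxE liftK unlift_none.
  by case: eqP => [->|_]; rewrite ?addr0 // addrC subrK.
have := a_lift j; rewrite eqxx => a_j.
have ai := a_ge0 i; have aij := a_ge0 (lift i j).
have sj := s_ge0 j; have tj := t_ge0 j.
exists b, (a - b); split.
- move=> k; rewrite mxE; case: (unlift i k) => [k'|]; last by lra.
  by case: eqP => _; [lra | apply: s_ge0].
- move=> k; rewrite !mxE; case: (unliftP i k) => [k' ->|->]; last by lra.
  case: eqP => [->|/eqP k'_neq_j]; first by lra.
  by have := a_lift k'; have := t_ge0 k'; rewrite (negbTE k'_neq_j); lra.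
- by rewrite addrC subrK.
- exact: merge_b.
- by rewrite raddfB /= merge_b merge_a addrC addKr.
Qed.

End NonnegMerge.

Lemma merge_coord_transfer (m n : nat) (B : 'M[int]_(m, n.+1))
    (i : 'I_n.+1) (j : 'I_n) :
  col (lift i j) B = col i B ->
  is_transfer_hom (nonneg_ker B) (nonneg_ker (col' i B)) (merge_coord i j).
Proof.
move=> eq_col; have mulB x := mul_col'_merge_coord x eq_col.
split=> [x [x_ge0 Bx0] | ].
  by split; [exact: merge_coord_nonneg | rewrite mulB].
split; first exact: raddf0.
split; first by move=> x y _ _; exact: raddfD.
split=> [t [t_ge0 Bt0] | ].
  exists (insert0_coord i t); rewrite merge_coordK.
  by split=> //; split; [exact: insert0_coord_nonneg | rewrite -mulB merge_coordK].
split=> [x [x_ge0 _] | ]; first exact: merge_coord_eq0.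
move=> a s t [a_ge0 _] [s_ge0 Bs0] [t_ge0 Bt0].
move=> /(merge_coord_split a_ge0 s_ge0 t_ge0) [b [c [b_ge0 c_ge0 -> bs ct]]].
by exists b, c; split=> //; split=> //; rewrite -mulB ?bs ?ct.
Qed.

Theorem lemma3p15 (m n : nat) (B : 'M[int]_(m, n.+2)) :
  col ord0 B = col (inord 1) B ->
  exists theta : 'cV[int]_n.+2 -> 'cV[int]_n.+1,
    is_transfer_hom (nonneg_ker B) (nonneg_ker (col' (inord 1) B)) theta.
Proof.
move=> eq_col; exists (merge_coord (inord 1) ord0).
apply: merge_coord_transfer.
suff -> : lift (inord 1) ord0 = ord0 :> 'I_n.+2 by [].
by apply: val_inj; rewrite /= /bump inordK.
Qed.
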